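(* Let $B$ be a unital $C^*$-algebra with a $*$-isomorphism $\psi:B\to M_n\otimes B$ satisfying $\psi(1)=I_n\otimes1$, let $A$ be a maximal abelian $*$-subalgebra of $B$, and let $\phi:A\to\mathbb{C}$ be a unital algebra homomorphism extended to a positive contraction $\phi:B\to\mathbb{C}$. If $\sigma_1(A)\subset A$, then $\phi_{m+1}(A)\subset M_n\otimes\phi_m(A)$ for all $m\ge1$.
   Context: $M_n=M_n(\mathbb{C})$, identity $I_n$. Define $\psi_0=\mathrm{id}_B$, $\psi_{m+1}=(\mathrm{id}^{\otimes m}\otimes\psi)\circ\psi_m:B\to M_n^{\otimes(m+1)}\otimes B$. With $f(b)=I_n\otimes b$, $\sigma_1=\psi^{-1}\circ f:B\to B$. For $m\ge1$, $\phi_m=(\mathrm{id}^{\otimes m}\otimes\phi)\circ\psi_m:B\to M_n^{\otimes m}$. *)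

From mathcomp Require Import all_boot all_algebra.
From mathcomp Require Import complex reals.
Import GRing.Theory Num.Theory.
Set Implicit Arguments. Unset Strict Implicit. Unset Printing Implicit Defensive.
Local Open Scope ring_scope.
Local Open Scope complex_scope.

Section CStar.
Variable R : realType.
Local Notation C := R[i].

Definition is_unital_cstar (B : algType C) (star : B -> B) (nrm : B -> R) : Prop :=
  [/\
      (forall x, 0 <= nrm x) /\ (forall x, nrm x = 0 -> x = 0),
      (forall x y, nrm (x + y) <= nrm x + nrm y) /\
      (forall (c : C) x, (nrm (c *: x))%:C = `|c| * (nrm x)%:C),
      (forall x y, nrm (x * y) <= nrm x * nrm y),
      (forall u : nat -> B,
         (forall e : R, 0 < e -> exists N, forall p q, (N <= p)%N -> (N <= q)%N ->
              nrm (u p - u q) < e) ->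
         exists l, forall e : R, 0 < e -> exists N, forall p, (N <= p)%N ->
              nrm (u p - l) < e) &
      [/\ (forall x, star (star x) = x),
          (forall x y, star (x + y) = star x + star y),
          (forall (c : C) x, star (c *: x) = c^* *: star x),
          (forall x y, star (x * y) = star y * star x) &
          (forall x, nrm (star x * x) = nrm x ^+ 2)]].

Variable B : algType C.
Variable star : B -> B.

(* M_n (x) B is identified with n x n matrices over B; its involution *)
Definition mx_star n (X : 'M[B]_n) : 'M[B]_n := \matrix_(i, j) star (X j i).

Definition is_star_iso n (psi : B -> 'M[B]_n) : Prop :=
  [/\ bijective psi,
      (forall x y, psi (x + y) = psi x + psi y),
      (forall (c : C) x, psi (c *: x) = map_mx ( *:%R c) (psi x)),
      (forall x y, psi (x * y) = psi x *m psi y) &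
      (forall x, psi (star x) = mx_star (psi x))].

Definition is_star_subalg (S : B -> Prop) : Prop :=
  [/\ S 0, (forall x y, S x -> S y -> S (x + y)),
      (forall (c : C) x, S x -> S (c *: x)),
      (forall x y, S x -> S y -> S (x * y)) &
      (forall x, S x -> S (star x))].

Definition is_abelian (S : B -> Prop) : Prop :=
  forall x y, S x -> S y -> x * y = y * x.

Definition is_masa (A : B -> Prop) : Prop :=
  [/\ is_star_subalg A, is_abelian A &
      forall S, is_star_subalg S -> is_abelian S ->
        (forall x, A x -> S x) -> forall x, S x -> A x].

Definition is_pos_contraction (nrm : B -> R) (phi : B -> C) : Prop :=
  [/\ (forall x y, phi (x + y) = phi x + phi y),
      (forall (c : C) x, phi (c *: x) = c * phi x),
      (forall x, 0 <= phi (star x * x)) &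
      (forall x, `|phi x| <= (nrm x)%:C)].

Definition is_unital_hom_on (A : B -> Prop) (phi : B -> C) : Prop :=
  phi 1 = 1 /\ forall x y, A x -> A y -> phi (x * y) = phi x * phi y.

(* Multi-indices for M_n^{(x) m}: a tuple (i_1,...,i_m) of indices in 'I_n,
   represented as a function 'I_m -> 'I_n.  An element of M_n^{(x) m} (x) B is
   a function (row multi-index) -> (column multi-index) -> B. *)
Definition mindex n m := 'I_m -> 'I_n.

(* drop the last tensor factor / take the last tensor factor *)
Definition mi_init n m (I : mindex n m.+1) : mindex n m :=
  fun k => I (widen_ord (leqnSn m) k).
Definition mi_last n m (I : mindex n m.+1) : 'I_n := I ord_max.
(* prepend a first tensor factor *)
Definition mi_cons n m (i : 'I_n) (I : mindex n m) : mindex n m.+1 :=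
  fun k => match unlift ord0 k with Some k' => I k' | None => i end.

(* psi_0 = id, psi_{m+1} = (id^{(x)m} (x) psi) o psi_m *)
Fixpoint psi_m n (psi : B -> 'M[B]_n) (m : nat)
  : B -> mindex n m -> mindex n m -> B :=
  match m with
  | 0 => fun b _ _ => b
  | m'.+1 => fun b I J =>
      psi (@psi_m n psi m' b (mi_init I) (mi_init J)) (mi_last I) (mi_last J)
  end.

(* phi_m = (id^{(x)m} (x) phi) o psi_m *)
Definition phi_m n (psi : B -> 'M[B]_n) (phi : B -> C) (m : nat)
  (b : B) : mindex n m -> mindex n m -> C :=
  fun I J => phi (@psi_m n psi m b I J).

(* f(b) = I_n (x) b, and sigma_1 = psi^{-1} o f maps A into A *)
Definition sigma1_preserves n (psi : B -> 'M[B]_n) (A : B -> Prop) : Prop :=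
  forall a, A a -> forall b, psi b = a%:M -> A b.

Definition phi_m_image n psi phi m (A : B -> Prop)
  (X : mindex n m -> mindex n m -> C) : Prop :=
  exists2 a, A a & forall I J, @phi_m n psi phi m a I J = X I J.

(* M_n (x) S for a subspace S of M_n^{(x) m}: the elements of
   M_n^{(x)(m+1)} all of whose (i,j) blocks (first tensor factor) lie in S *)
Definition tensor_Mn n m (S : (mindex n m -> mindex n m -> C) -> Prop)
  (X : mindex n m.+1 -> mindex n m.+1 -> C) : Prop :=
  forall i j : 'I_n, S (fun I J => X (mi_cons i I) (mi_cons j J)).

End CStar.

Arguments psi_m [R B n] psi m b _ _.
Arguments phi_m [R B n] psi phi m b _ _.
Arguments phi_m_image [R B n] psi phi m A X.

(* For a in A and t in A, sigma_1(t) lies in A and commutes with a, so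
   psi(a) commutes with psi(sigma_1(t)) = I_n (x) t: every entry psi(a)_ij
   commutes with A, and so does its adjoint psi(star a)_ji.  Splitting psi(a)_ij
   into self-adjoint parts and using maximality of A puts psi(a)_ij in A.
   Since the (i,j) block of psi_{m+1}(a) is psi_m(psi(a)_ij), the (i,j) block
   of phi_{m+1}(a) is phi_m(psi(a)_ij), an element of phi_m(A). *)
From mathcomp Require Import all_boot all_algebra.
From mathcomp Require Import complex reals.
From Stdlib Require Import FunctionalExtensionality.
Import GRing.Theory Num.Theory.
Set Implicit Arguments. Unset Strict Implicit. Unset Printing Implicit Defensive.
Local Open Scope ring_scope.
Local Open Scope complex_scope.

Lemma comm_scalar_mxE (Rg : pzRingType) n (M : 'M[Rg]_n) (x : Rg) i j :
  M *m x%:M = x%:M *m M -> M i j * x = x * M i j.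
Proof.
move=> /(congr1 (fun N : 'M_n => N i j)); rewrite mul_scalar_mx !mxE => <-.
rewrite (bigD1 j) //= big1 => [|k /negbTE nkj]; rewrite mxE ?nkj ?mulr0 //.
by rewrite eqxx mulr1n addr0.
Qed.

Lemma mi_init_cons n m (i : 'I_n) (I : mindex n m.+1) :
  mi_init (mi_cons i I) = mi_cons i (mi_init I).
Proof.
apply: functional_extensionality => k; rewrite /mi_init /mi_cons.
case: (unliftP ord0 k) => [k'|] ->.
  have -> : widen_ord (leqnSn m.+1) (lift ord0 k')
            = lift ord0 (widen_ord (leqnSn m) k') by apply: val_inj.
  by rewrite liftK.
have -> : widen_ord (leqnSn m.+1) ord0 = ord0 by apply: val_inj.
by rewrite unlift_none.
Qed.

Lemma mi_last_cons n m (i : 'I_n) (I : mindex n m.+1) :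
  mi_last (mi_cons i I) = mi_last I.
Proof.
rewrite /mi_last /mi_cons.
have -> : (ord_max : 'I_m.+2) = lift ord0 (ord_max : 'I_m.+1) by apply: val_inj.
by rewrite liftK.
Qed.

Lemma psi_mS (R : realType) (B : algType R[i]) n (psi : B -> 'M[B]_n) m b I J :
  psi_m psi m.+1 b I J
  = psi (psi_m psi m b (mi_init I) (mi_init J)) (mi_last I) (mi_last J).
Proof. by []. Qed.

Lemma psi_m_cons (R : realType) (B : algType R[i]) n (psi : B -> 'M[B]_n)
    m b i j I J :
  psi_m psi m.+1 b (mi_cons i I) (mi_cons j J) = psi_m psi m (psi b i j) I J.
Proof.
elim: m b I J => [|m IHm] b I J.
  rewrite /= /mi_last /mi_cons.
  have -> : (ord_max : 'I_1) = ord0 by apply: val_inj.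
  by rewrite unlift_none.
by rewrite psi_mS !mi_init_cons !mi_last_cons IHm.
Qed.

Section MaximalAbelian.
Variables (R : realType) (B : algType R[i]) (star : B -> B) (A : B -> Prop).
Hypotheses (starK : involutive star)
           (starD : forall x y, star (x + y) = star x + star y)
           (starZ : forall (c : R[i]) x, star (c *: x) = c^* *: star x)
           (starM : forall x y, star (x * y) = star y * star x).
Hypothesis masaA : is_masa star A.

Definition commutant (x : B) : Prop := forall t, A t -> x * t = t * x.

Lemma masa_selfadjoint_mem (h : B) :
  star h = h -> commutant h -> A h.
Proof.
move=> hh hA; have [[_ _ _ _ AS] abA maxA] := masaA.
(* S, the commutant of the commutant T of A and h, is an abelian
   *-subalgebra containing A and h. *)
pose T z := commutant z /\ z * h = h * z.
pose S x := forall z, T z -> x * z = z * x.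
have T_star z : T z -> T (star z).
  move=> [zA zh]; split; last by rewrite -hh -!starM zh.
  by move=> t At; rewrite -[t]starK -!starM zA ?starK //; apply: AS.
have A_T t : A t -> T t.
  by move=> At; split; [move=> u Au; apply: abA | rewrite hA].
have S_T x : S x -> T x.
  by move=> Sx; split; [move=> t At; rewrite Sx //; apply: A_T | rewrite Sx].
apply: (maxA S) => [||x Ax z [zA _]|]; last by move=> z [].
- split.
  + by move=> z _; rewrite mul0r mulr0.
  + by move=> x y Sx Sy z Tz; rewrite mulrDl mulrDr Sx // Sy.
  + by move=> c x Sx z Tz; rewrite -scalerAl -scalerAr Sx.
  + by move=> x y Sx Sy z Tz; rewrite -mulrA Sy // mulrA Sx // mulrA.
  + by move=> x Sx z /T_star/Sx; rewrite -[z]starK -!starM starK => ->.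
- by move=> x y Sx Sy; rewrite Sy //; apply: S_T.
- by rewrite zA.
Qed.

Lemma starN x : star (- x) = - star x.
Proof. by rewrite -scaleN1r starZ rmorphN1 scaleN1r. Qed.

Lemma masa_mem (y : B) :
  commutant y -> commutant (star y) -> A y.
Proof.
move=> yA ysA; have [[_ AD AZ _ _] _ _] := masaA.
pose h := y + star y; pose k := 'i *: (y - star y).
have Ah : A h.
  apply: masa_selfadjoint_mem; first by rewrite starD starK addrC.
  by move=> t At; rewrite mulrDl mulrDr yA // ysA.
have Ak : A k.
  apply: masa_selfadjoint_mem.
    by rewrite starZ starD starN starK conjCi scaleNr -scalerN opprB.
  by move=> t At; rewrite -scalerAl -scalerAr mulrBl mulrBr yA // ysA.
have -> : y = 2^-1 *: (h + (- 'i) *: k).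
  rewrite /h /k scalerA mulNr -expr2 sqrCi opprK scale1r addrA addrAC addrK.
  by rewrite -mulr2n -scalerMnr scalerMnl -mulr_natr mulVf ?scale1r ?pnatr_eq0.
exact: AZ (AD _ _ Ah (AZ _ _ Ak)).
Qed.

End MaximalAbelian.

Lemma psi_entry_in_commutant (R : realType) (B : algType R[i]) n
    (psi : B -> 'M[B]_n) (A : B -> Prop) :
  (forall x y, psi (x * y) = psi x *m psi y) ->
  (forall M, exists b, psi b = M) ->
  is_abelian A -> sigma1_preserves psi A ->
  forall b, A b -> forall i j, commutant A (psi b i j).
Proof.
move=> psiM psi_surj abA sigma1A b Ab i j t At.
have [s psis] := psi_surj t%:M.
have As : A s := sigma1A t At s psis.
apply: comm_scalar_mxE.
by rewrite -psis -!psiM abA.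
Qed.

Theorem proposition3p6 (R : realType) (B : algType R[i]) (star : B -> B)
  (nrm : B -> R) (n : nat) (psi : B -> 'M[B]_n) (A : B -> Prop)
  (phi : B -> R[i]) :
  is_unital_cstar star nrm ->
  is_star_iso star psi ->
  psi 1 = 1%:M ->
  is_masa star A ->
  is_unital_hom_on A phi ->
  is_pos_contraction star nrm phi ->
  sigma1_preserves psi A ->
  forall m : nat, (1 <= m)%N ->
    forall a, A a ->
      tensor_Mn (phi_m_image psi phi m A) (phi_m psi phi m.+1 a).
Proof.
move=> [_ _ _ _ [starK starD starZ starM _]] [psi_bij _ _ psiM psi_star] _.
move=> masaA _ _ sigma1A m _ a Aa i j.
have [[_ _ _ _ A_star] abA _] := masaA.
have psi_surj M : exists b, psi b = M.
  by have [g _ gK] := psi_bij; exists (g M).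
have entry_comm := psi_entry_in_commutant psiM psi_surj abA sigma1A.
exists (psi a i j); last by move=> I J; rewrite /phi_m psi_m_cons.
apply: (masa_mem starK starD starZ starM masaA); first exact: entry_comm.
have -> : star (psi a i j) = psi (star a) j i by rewrite psi_star mxE.
exact/entry_comm/A_star.
Qed.
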